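(* For every graph $G$ and every distension $\widehat{G}$ of $G$, we have $\operatorname{tw}(\widehat{G})\leq\max\{\operatorname{tw}(G),3\}$ and $\operatorname{pw}(\widehat{G})\leq\operatorname{pw}(G)+2$.
   Context: All graphs are finite, simple and undirected. $\operatorname{tw}$ and $\operatorname{pw}$ denote treewidth and pathwidth. A distension of a graph $G$ is any graph $\widehat{G}$ obtained from $G$ by adding, for each edge $vw\in E(G)$, a new path $P_{vw}$ (with at least one vertex) each of whose vertices is adjacent to both $v$ and $w$, where the paths $P_{vw}$ are vertex-disjoint from $G$ and pairwise vertex-disjoint for distinct edges, and no other edges are added. *)

From Stdlib Require Import ClassicalEpsilon.
From mathcomp Require Import all_boot.
Set Implicit Arguments. Unset Strict Implicit. Unset Printing Implicit Defensive.

Definition simple_graph (V : finType) (e : rel V) : Prop :=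
  symmetric e /\ irreflexive e.

Definition connected_rel (I : finType) (t : rel I) : Prop :=
  forall x y : I, connect t x y.

Definition acyclic_rel (I : finType) (t : rel I) : Prop :=
  forall (x : I) (p : seq I), uniq (x :: p) -> 2 <= size p -> path t x p ->
    ~~ t (last x p) x.

Definition is_tree (I : finType) (t : rel I) : Prop :=
  simple_graph t /\ connected_rel t /\ acyclic_rel t.

Definition tree_decomposition (V : finType) (e : rel V)
    (I : finType) (t : rel I) (B : I -> {set V}) : Prop :=
  is_tree t /\
  (forall v : V, exists i, v \in B i) /\
  (forall v w : V, e v w -> exists i, (v \in B i) && (w \in B i)) /\
  (forall (v : V) (i j : I), v \in B i -> v \in B j ->
     connect [rel a b | [&& t a b, v \in B a & v \in B b]] i j).

Definition tw_le (V : finType) (e : rel V) (k : nat) : Prop :=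
  exists (I : finType) (t : rel I) (B : I -> {set V}),
    tree_decomposition e t B /\ (\max_(i : I) #|B i| <= k.+1).

Lemma tw_le_exists (V : finType) (e : rel V) : exists k, tw_le e k.
Proof.
exists #|V|; exists unit, (fun _ _ => false), (fun _ => setT).
split; last first.
  by apply/bigmax_leqP => i _; rewrite cardsT leqW.
split.
  split; first by split.
  split; first by case; case; apply: connect0.
  by move=> x [|a [|b p]] //=.
split; first by move=> v; exists tt; rewrite inE.
split; first by move=> v w _; exists tt; rewrite !inE.
by move=> v [] [] _ _; apply: connect0.
Qed.

Definition decP (P : Prop) : bool :=
  if excluded_middle_informative P then true else false.

Lemma decPE (P : Prop) : decP P <-> P.
Proof. by rewrite /decP; case: excluded_middle_informative. Qed.

Lemma tw_le_existsb (V : finType) (e : rel V) :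
  exists k, decP (tw_le e k).
Proof. by case: (tw_le_exists e) => k Hk; exists k; apply/decPE. Qed.

Definition treewidth (V : finType) (e : rel V) : nat :=
  ex_minn (tw_le_existsb e).

Definition path_decomposition (V : finType) (e : rel V) (s : seq {set V}) : Prop :=
  (forall v : V, exists2 X, X \in s & v \in X) /\
  (forall v w : V, e v w -> exists2 X, X \in s & (v \in X) && (w \in X)) /\
  (forall i j k : nat, i <= j -> j <= k -> k < size s ->
     nth set0 s i :&: nth set0 s k \subset nth set0 s j).

Definition pw_le (V : finType) (e : rel V) (k : nat) : Prop :=
  exists s : seq {set V},
    path_decomposition e s /\ (\max_(X <- s) #|X| <= k.+1).

Lemma pw_le_exists (V : finType) (e : rel V) : exists k, pw_le e k.
Proof.
exists #|V|; exists [:: setT]; split; last first.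
  by rewrite big_seq1 cardsT leqW.
split; first by move=> v; exists setT; rewrite ?inE.
split; first by move=> v w _; exists setT; rewrite ?inE.
by move=> [|i] [|j] [|k] //=; rewrite subsetT.
Qed.

Lemma pw_le_existsb (V : finType) (e : rel V) :
  exists k, decP (pw_le e k).
Proof. by case: (pw_le_exists e) => k Hk; exists k; apply/decPE. Qed.

Definition pathwidth (V : finType) (e : rel V) : nat :=
  ex_minn (pw_le_existsb e).

Definition induces_path (W : finType) (f : rel W) (S : {set W}) : Prop :=
  exists s : seq W,
    [/\ s != [::], uniq s, (forall x, (x \in s) = (x \in S)) &
        (forall x y, x \in S -> y \in S ->
           f x y = ((x, y) \in zip s (behead s)) || ((y, x) \in zip s (behead s)))].

(* (W, f) is a distension of (V, e): i embeds G; every other vertex x is a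
   vertex of the new path attached to the edge {end1 x, end2 x} of G. *)
Definition is_distension (V W : finType) (e : rel V) (f : rel W) : Prop :=
  exists (i : V -> W) (end1 end2 : W -> V),
  let new := fun x => x \notin codom i in
  let P := fun v w => [set x | new x & [set end1 x; end2 x] == [set v; w]] in
  injective i /\
  [/\ (forall v w, f (i v) (i w) = e v w),
      (forall x, new x -> e (end1 x) (end2 x)),
      (forall x u, new x -> f x (i u) = (u == end1 x) || (u == end2 x)),
      (forall x y, new x -> new y ->
         [set end1 x; end2 x] != [set end1 y; end2 y] -> f x y = false) &
      (forall v w, e v w -> induces_path f (P v w))].

From mathcomp Require Import all_boot.
From Stdlib Require Import Lia ClassicalEpsilon.
From mathcomp Require Import zify.
Set Implicit Arguments. Unset Strict Implicit. Unset Printing Implicit Defensive.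

(* Every new vertex x lies on a unique path P_vw, its strand.  A tree
   decomposition of G extends to one of the distension by a node with bag
   {v, w, x, x'} for each new vertex x, where x' is the successor of x on P_vw;
   this node hangs below the node of the predecessor of x, or, for the first
   vertex of P_vw, below a bag containing v and w.  The new bags have size at
   most 4.  For paths, right after the first bag X containing v and w we insert
   the bags X + {x, x'} for the vertices x of P_vw in path order: each new
   vertex then occurs in two consecutive bags, and bags grow by at most 2. *)

Lemma mem_zip (S T : eqType) (s : seq S) (t : seq T) x y :
  (x, y) \in zip s t -> x \in s /\ y \in t.
Proof.
elim: s t => [|a s IH] [|b t] //=.
rewrite in_cons => /orP [/eqP [-> ->]|/IH [xs yt]]; first by split; apply: mem_head.
by rewrite !in_cons xs yt !orbT.
Qed.

Lemma index_zip_behead (T : eqType) (s : seq T) x y :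
  uniq s -> (x, y) \in zip s (behead s) -> index y s = (index x s).+1.
Proof.
elim: s => [|a s IH] //= /andP [aNs us].
case: s IH aNs us => [|b s] IH aNs us //=.
have notin_a u : u \in b :: s -> (a == u) = false.
  by move=> us'; apply: contraNF aNs => /eqP ->.
rewrite in_cons => /orP [/eqP [-> ->]|xy]; first by rewrite /= !eqxx notin_a ?mem_head.
have [xs ys] := mem_zip xy; have {}ys : y \in b :: s by rewrite in_cons ys orbT.
by have := IH us xy; rewrite /= !notin_a // => ->.
Qed.

Lemma connect_map (T1 T2 : finType) (g : T1 -> T2) (r1 : rel T1) (r2 : rel T2) :
  {homo g : a b / r1 a b >-> r2 a b} ->
  {homo g : a b / connect r1 a b >-> connect r2 a b}.
Proof.
move=> r12 a b /connectP [p pth ->]; apply/connectP; exists (map g p).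
  by rewrite path_map; apply: sub_path pth => u v /r12.
by rewrite last_map.
Qed.

Lemma cycle_two_neighbors (T : eqType) (r : rel T) (c : seq T) z :
  symmetric r -> uniq c -> 2 < size c -> cycle r c -> z \in c ->
  exists a b, [/\ a \in c, b \in c, a != b, r z a & r z b].
Proof.
move=> rsym uc sc cc zc.
have := mem_rot (index z c) c; have : uniq (rot (index z c) c) by rewrite rot_uniq.
have : cycle r (rot (index z c) c) by rewrite rot_cycle.
have : 2 < size (rot (index z c) c) by rewrite size_rot.
rewrite rot_index //; case: (drop _ _ ++ take _ _) => [|a [|b q]] //= _.
move=> /andP [za /andP [_]]; rewrite rcons_path => /andP [_ lz].
move=> /and3P [_ aNbq _] mc.
have lq : last b q \in b :: q by apply: mem_last.
exists a, (last b q); rewrite -!mc [r z (last _ _)]rsym; split=> //.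
- by rewrite in_cons mem_head orbT.
- by rewrite !(in_cons z, in_cons a) lq !orbT.
- by apply: contraNneq aNbq => ->.
Qed.

Lemma all_inl_map (A B : Type) (s : seq (A + B)) :
  all (fun z => if z is inl _ then true else false) s -> exists s0, s = map inl s0.
Proof.
elim: s => [|[a|b] s IH] //=; first by exists [::].
by move=> /IH [s0 ->]; exists (a :: s0).
Qed.

Lemma acyclic_relP (T : finType) (r : rel T) :
  acyclic_rel r <-> forall c, uniq c -> 2 < size c -> ~~ cycle r c.
Proof.
split=> [acyc [|x p] //= ux sp|nocyc x p ux sp px].
  by rewrite rcons_path; apply/andP => -[px]; apply/negP; apply: acyc.
by apply: contra (nocyc _ ux sp) => lx; rewrite /= rcons_path px.
Qed.

Section Attach.
Variables (I J : finType) (t : rel I) (par : J -> I + J) (rk : J -> nat).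
Hypothesis tree_t : is_tree t.
Hypothesis par_rk : forall x y, par x = inr y -> rk y < rk x.

(* Each node of [J] hangs below its parent; [rk] decreases along [par], so
   every chain of parents ends in the tree [t]. *)
Definition attach_rel (a b : I + J) : bool :=
  match a, b with
  | inl a, inl b => t a b
  | inl a, inr y => par y == inl a
  | inr x, inl b => par x == inl b
  | inr x, inr y => (par x == inr y) || (par y == inr x)
  end.

Lemma attach_rel_sym : symmetric attach_rel.
Proof.
by case: tree_t => [[tsym _] _] [a|x] [b|y] //=; rewrite ?tsym // orbC.
Qed.

Lemma attach_rel_par x : attach_rel (inr x) (par x).
Proof. by rewrite /attach_rel; case: (par x) => [a|y]; rewrite eqxx. Qed.

Lemma attach_rel_irr : irreflexive attach_rel.
Proof.
case: tree_t => [[_ tirr] _] [a|x] /=; first exact: tirr.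
by apply/negP => /orP [] /eqP /par_rk; rewrite ltnn.
Qed.

Lemma connect_attach_root x : exists a, connect attach_rel (inr x) (inl a).
Proof.
elim: {x}(rk x).+1 {-2}x (ltnSn (rk x)) => // n IH x.
case Ex: (par x) => [a|y] rkx.
  by exists a; apply: connect1; rewrite -Ex attach_rel_par.
have [a ya] := IH y (leq_trans (par_rk Ex) rkx).
by exists a; apply: connect_trans ya; apply: connect1; rewrite -Ex attach_rel_par.
Qed.

Lemma attach_connected : connected_rel attach_rel.
Proof.
case: tree_t => [_ [tconn _]].
have csym : connect_sym attach_rel by apply: sym_connect_sym; apply: attach_rel_sym.
have conn_inl a b : connect attach_rel (inl a) (inl b).
  by apply: (connect_map (r1 := t)) => //; apply: tconn.
have conn_root z : exists a, connect attach_rel z (inl a).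
  by case: z => [a|x]; [exists a | apply: connect_attach_root].
move=> z1 z2; have [a1 z1a1] := conn_root z1; have [a2 z2a2] := conn_root z2.
apply: connect_trans z1a1 _; rewrite csym; apply: connect_trans z2a2 _.
exact: conn_inl.
Qed.

Lemma attach_cycle_max_rank (c : seq (I + J)) m z :
  (forall y, inr y \in c -> rk y <= rk m) -> z \in c ->
  attach_rel (inr m) z -> z = par m.
Proof.
move=> mmax; case: z => [b|y] zc /=; first by move/eqP.
by case/orP => [/eqP //|/eqP /par_rk]; rewrite ltnNge mmax.
Qed.

Lemma attach_acyclic : acyclic_rel attach_rel.
Proof.
case: tree_t => [_ [_ tacyc]]; apply/acyclic_relP => c uc sc.
case: (boolP (has (fun z => if z is inr _ then true else false) c)) => [|noinr].
  (* a node of maximal rank on the cycle has two neighbours there, both its parent *)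
  case/hasP=> -[//|j0] j0c _; apply/negP => cc.
  have [m mc mmax] := @arg_maxnP J j0 (fun j => inr j \in c) rk j0c.
  have [a [b [ac bc ab ma mb]]] := cycle_two_neighbors attach_rel_sym uc sc cc mc.
  move: ab; rewrite (attach_cycle_max_rank mmax ac ma).
  by rewrite (attach_cycle_max_rank mmax bc mb) eqxx.
have [c0 c0E] : exists c0, c = map inl c0.
  apply: all_inl_map; apply/allP => -[//|y] yc.
  by move: noinr => /hasPn /(_ _ yc).
move: uc sc; rewrite c0E (map_inj_uniq (@inl_inj _ _)) size_map => uc0 sc0.
by rewrite (mono_cycle (e := t)) //; move/acyclic_relP: tacyc; apply.
Qed.

Lemma attach_tree : is_tree attach_rel.
Proof.
split; first by split; [apply: attach_rel_sym | apply: attach_rel_irr].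
by split; [apply: attach_connected | apply: attach_acyclic].
Qed.

End Attach.

(* Mixed-radix code: it orders triples lexicographically when [r, p < M]. *)
Definition code3 M b r p := (b * M + r) * M + p.

Lemma code3K M b r p : r < M -> p < M ->
  [/\ code3 M b r p %/ M %/ M = b, code3 M b r p %/ M %% M = r
    & code3 M b r p %% M = p].
Proof.
move=> rM pM; have M0 : 0 < M by apply: leq_ltn_trans rM.
rewrite /code3 divnMDl // (divn_small pM) addn0 divnMDl // (divn_small rM) addn0.
by rewrite modnMDl modnMDl !modn_small.
Qed.

Lemma leq_code3 M b r p b' r' p' : r < M -> p < M -> r' < M -> p' < M ->
  code3 M b r p <= code3 M b' r' p' -> b <= b'.
Proof.
move=> rM pM r'M p'M le_code; have [<- _ _] := code3K b rM pM.
by have [<- _ _] := code3K b' r'M p'M; rewrite !leq_div2r.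
Qed.

Lemma code3_inj M b r p b' r' p' : r < M -> p < M -> r' < M -> p' < M ->
  code3 M b r p = code3 M b' r' p' -> [/\ b = b', r = r' & p = p'].
Proof.
move=> rM pM r'M p'M E.
have [b_of r_of p_of] := code3K b rM pM; have [b'_of r'_of p'_of] := code3K b' r'M p'M.
by split; [rewrite -b_of -b'_of | rewrite -r_of -r'_of | rewrite -p_of -p'_of]; rewrite E.
Qed.

Lemma interval_nth_sorted (J : eqType) (U : finType) (js : seq J) (key : J -> nat)
    (Bg : J -> {set U}) :
  sorted (fun a b => key a <= key b) js ->
  {in js & &, forall a b c, key a <= key b -> key b <= key c ->
     Bg a :&: Bg c \subset Bg b} ->
  forall i j k, i <= j -> j <= k -> k < size (map Bg js) ->
  nth set0 (map Bg js) i :&: nth set0 (map Bg js) k \subset nth set0 (map Bg js) j.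
Proof.
case: js => [|j0 js'] // srt itv a b c ab bc; set js := j0 :: js'.
rewrite size_map => cs; have bs := leq_ltn_trans bc cs; have as' := leq_ltn_trans ab bs.
rewrite !(nth_map j0) //.
have mono := sorted_leq_nth (leT := fun a b => key a <= key b)
  (fun y x z => @leq_trans (key y) (key x) (key z)) (fun x => leqnn (key x)) j0 srt.
by apply: itv; rewrite ?mem_nth //; apply: mono; rewrite ?inE.
Qed.

Section Distension.
Variables (V W : finType) (e : rel V) (f : rel W) (i : V -> W) (end1 end2 : W -> V).

Definition new_vertex x := x \notin codom i.
Definition ends x : {set V} := [set end1 x; end2 x].
Definition strand x : {set W} := [set y | new_vertex y & ends y == ends x].

Definition orders_path (A : {set W}) (s : seq W) : Prop :=
  [/\ s != [::], uniq s, (forall x, (x \in s) = (x \in A)) &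
      (forall x y, x \in A -> y \in A ->
         f x y = ((x, y) \in zip s (behead s)) || ((y, x) \in zip s (behead s)))].

(* Junk unless [x] is new: only then is the predicate known to be inhabited. *)
Definition strand_seq x : seq W := epsilon (inhabits [::]) (orders_path (strand x)).
Definition pos x := index x (strand_seq x).
Definition prev x := nth x (strand_seq x) (pos x).-1.
Definition succ x : {set W} := [set y in strand x | pos y == (pos x).+1].
Definition new_bag (A : {set V}) x : {set W} := i @: A :|: [set x] :|: succ x.

Hypothesis fsym : symmetric f.
Hypothesis inj_i : injective i.
Hypothesis f_img : forall v w, f (i v) (i w) = e v w.
Hypothesis e_ends : forall x, new_vertex x -> e (end1 x) (end2 x).
Hypothesis f_new_img : forall x u, new_vertex x ->
  f x (i u) = (u == end1 x) || (u == end2 x).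
Hypothesis f_new_new : forall x y, new_vertex x -> new_vertex y ->
  ends x != ends y -> f x y = false.
Hypothesis strand_path : forall v w, e v w ->
  induces_path f [set x | x \notin codom i & [set end1 x; end2 x] == [set v; w]].

Lemma new_vertex_img u : new_vertex (i u) = false.
Proof. by rewrite /new_vertex codom_f. Qed.

Lemma img_new_neq u x : new_vertex x -> i u != x.
Proof. by apply: contraTneq => <-; rewrite new_vertex_img. Qed.

Lemma new_notin_imset (A : {set V}) z : new_vertex z -> z \notin i @: A.
Proof. by apply: contraTN => /imsetP [u _ ->]; rewrite new_vertex_img. Qed.

Lemma strand_self x : new_vertex x -> x \in strand x.
Proof. by move=> nx; rewrite inE nx eqxx. Qed.

Lemma strand_ends x y : y \in strand x -> ends y = ends x.
Proof. by rewrite inE => /andP [_ /eqP]. Qed.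

Lemma strand_new x y : y \in strand x -> new_vertex y.
Proof. by rewrite inE => /andP []. Qed.

Lemma strand_eq x y : y \in strand x -> strand y = strand x.
Proof. by move=> /strand_ends E; apply/setP => z; rewrite !inE E. Qed.

Lemma strand_seq_eq x y : y \in strand x -> strand_seq y = strand_seq x.
Proof. by move=> /strand_eq E; rewrite /strand_seq E. Qed.

Lemma strand_seqP x : new_vertex x -> orders_path (strand x) (strand_seq x).
Proof.
move=> nx; apply: epsilon_spec.
by have [s Hs] := strand_path (e_ends nx); exists s.
Qed.

Lemma mem_strand_seq x y : new_vertex x -> (y \in strand_seq x) = (y \in strand x).
Proof. by move=> /strand_seqP []. Qed.

Lemma strand_seq_uniq x : new_vertex x -> uniq (strand_seq x).
Proof. by move=> /strand_seqP []. Qed.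

Lemma pos_lt_size x : new_vertex x -> pos x < size (strand_seq x).
Proof. by move=> nx; rewrite index_mem mem_strand_seq // strand_self. Qed.

Lemma pos_lt_card x : new_vertex x -> pos x < #|W|.
Proof.
move=> nx; apply: leq_trans (pos_lt_size nx) _.
by rewrite -(card_uniqP (strand_seq_uniq nx)) max_card.
Qed.

Lemma pos_inj x y : new_vertex x -> y \in strand x -> pos y = pos x -> y = x.
Proof.
move=> nx yx; rewrite /pos (strand_seq_eq yx).
by apply: (index_inj x); rewrite mem_strand_seq // strand_self.
Qed.

Lemma new_adj x y : new_vertex x -> new_vertex y -> f x y ->
  y \in strand x /\ (pos y = (pos x).+1 \/ pos x = (pos y).+1).
Proof.
move=> nx ny fxy.
have yx : y \in strand x.
  rewrite inE ny /=; apply: contraLR fxy => ends_yx.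
  by rewrite f_new_new // eq_sym.
have [_ us _ f_zip] := strand_seqP nx.
split=> //; move: fxy; rewrite f_zip ?strand_self // /pos (strand_seq_eq yx).
by case/orP => /(index_zip_behead us) ->; [left|right].
Qed.

Lemma succ_strand x y : y \in succ x -> y \in strand x.
Proof. by rewrite inE => /andP []. Qed.

Lemma succ_new x y : y \in succ x -> new_vertex y.
Proof. by move=> /succ_strand /strand_new. Qed.

Lemma succ_pos x y : y \in succ x -> pos y = (pos x).+1.
Proof. by rewrite inE => /andP [_ /eqP]. Qed.

Lemma mem_succ x y : y \in strand x -> pos y = (pos x).+1 -> y \in succ x.
Proof. by move=> yx pxy; rewrite inE yx pxy eqxx. Qed.

Lemma new_adj_succ x y : new_vertex x -> new_vertex y -> f x y ->
  y \in succ x \/ x \in succ y.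
Proof.
move=> nx ny fxy; have [yx [pxy|pyx]] := new_adj nx ny fxy.
  by left; apply: mem_succ.
by right; apply: mem_succ pyx; rewrite (strand_eq yx) strand_self.
Qed.

Lemma card_succ x : new_vertex x -> #|succ x| <= 1.
Proof.
move=> nx; rewrite -(cards1 (nth x (strand_seq x) (pos x).+1)) subset_leq_card //.
apply/subsetP => y yx; rewrite inE -(succ_pos yx).
by rewrite /pos (strand_seq_eq (succ_strand yx)) nth_index // mem_strand_seq // succ_strand.
Qed.

Lemma prev_succ x y : new_vertex x -> y \in succ x -> prev y = x.
Proof.
move=> nx yx; rewrite /prev (succ_pos yx) /= (strand_seq_eq (succ_strand yx)).
by rewrite /pos nth_index // mem_strand_seq // strand_self.
Qed.

Lemma prev_strand y : new_vertex y -> 0 < pos y -> prev y \in strand y.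
Proof.
move=> ny py; rewrite -mem_strand_seq // mem_nth //.
exact: leq_ltn_trans (leq_pred _) (pos_lt_size ny).
Qed.

Lemma pos_prev y : new_vertex y -> 0 < pos y -> pos (prev y) = (pos y).-1.
Proof.
move=> ny py; have ys := prev_strand ny py.
rewrite {1}/pos (strand_seq_eq ys) index_uniq ?strand_seq_uniq //.
exact: leq_ltn_trans (leq_pred _) (pos_lt_size ny).
Qed.

Lemma succ_prev y : new_vertex y -> 0 < pos y -> y \in succ (prev y).
Proof.
move=> ny py; apply: mem_succ; last by rewrite pos_prev // prednK.
by rewrite (strand_eq (prev_strand ny py)) strand_self.
Qed.

Lemma card_new_bag (A : {set V}) x : new_vertex x -> #|new_bag A x| <= #|A| + 2.
Proof.
move=> nx; have := (leq_card_setU (i @: A :|: [set x]) (succ x)).1.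
have := (leq_card_setU (i @: A) [set x]).1; rewrite cards1.
have := leq_imset_card i A; have := card_succ nx; rewrite /new_bag; lia.
Qed.

Lemma card_ends x : #|ends x| <= 2.
Proof. by rewrite cards2 ltnS leq_b1. Qed.

Lemma new_bagS (A B : {set V}) x : A \subset B -> new_bag A x \subset new_bag B x.
Proof. by move=> AB; rewrite /new_bag !setSU // imsetS. Qed.

Lemma mem_new_bag_img (A : {set V}) x u : new_vertex x -> (i u \in new_bag A x) = (u \in A).
Proof.
move=> nx; rewrite !in_setU mem_imset // in_set1 (negbTE (img_new_neq u nx)).
by rewrite [i u \in succ x]negbTE ?orbF //; apply: contraFN (new_vertex_img u) => /succ_new.
Qed.

Lemma mem_new_bag_new (A : {set V}) x z : new_vertex z ->
  (z \in new_bag A x) = (z == x) || (z \in succ x).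
Proof. by move=> nz; rewrite !in_setU (negbTE (new_notin_imset A nz)) in_set1. Qed.

Lemma new_bag_self (A : {set V}) x : x \in new_bag A x.
Proof. by rewrite !in_setU set11 orbT. Qed.

Lemma edge_new_bag z1 z2 : f z1 z2 ->
  (exists u1 u2, [/\ z1 = i u1, z2 = i u2 & e u1 u2]) \/
  exists2 x, new_vertex x & (z1 \in new_bag (ends x) x) && (z2 \in new_bag (ends x) x).
Proof.
have new_img_edge x u : new_vertex x -> f x (i u) ->
    (x \in new_bag (ends x) x) && (i u \in new_bag (ends x) x).
  by move=> nx; rewrite f_new_img // new_bag_self mem_new_bag_img // !inE.
case: (boolP (new_vertex z1)) => [n1|/negPn/codomP [u1 ->]];
case: (boolP (new_vertex z2)) => [n2|/negPn/codomP [u2 ->]] fz.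
- right; have [z21|z12] := new_adj_succ n1 n2 fz.
    by exists z1; rewrite // new_bag_self mem_new_bag_new // z21 orbT.
  by exists z2; rewrite // new_bag_self mem_new_bag_new // z12 orbT.
- by right; exists z1; rewrite // new_img_edge.
- by right; exists z2; rewrite // andbC new_img_edge // fsym.
- by left; exists u1, u2; rewrite -f_img.
Qed.

Local Notation new_type := {x : W | new_vertex x}.

Section TreeDecomposition.
Variables (k : nat) (I : finType) (t : rel I) (B : I -> {set V}).
Hypothesis tdB : tree_decomposition e t B.
Hypothesis widthB : \max_(a : I) #|B a| <= k.+1.

Lemma anchor_ex (x : new_type) : exists a, ends (val x) \subset B a.
Proof.
case: tdB => [_ [_ [edges _]]]; have [a /andP [ea1 ea2]] := edges _ _ (e_ends (valP x)).
by exists a; rewrite subUset !sub1set ea1 ea2.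
Qed.

Definition anchor (x : new_type) : I := xchoose (anchor_ex x).

Definition parent (x : new_type) : I + new_type :=
  if pos (val x) is 0 then inl (anchor x) else inr (insubd x (prev (val x))).

Lemma parent_inr x y : parent x = inr y ->
  [/\ val x \in succ (val y), pos (val y) < pos (val x) & ends (val y) = ends (val x)].
Proof.
rewrite /parent; case px: (pos (val x)) => [//|q] [<-].
have px0 : 0 < pos (val x) by rewrite px.
have yx := prev_strand (valP x) px0.
rewrite val_insubd (strand_new yx) /=.
rewrite (succ_prev (valP x) px0) (pos_prev (valP x) px0) px (strand_ends yx).
by split.
Qed.

Lemma parent_succ x y : val y \in succ (val x) -> parent y = inr x.
Proof.
move=> yx; rewrite /parent (succ_pos yx); congr inr; apply: val_inj.
by rewrite val_insubd (prev_succ (valP x) yx) (valP x).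
Qed.

Definition td_bag (j : I + new_type) : {set W} :=
  match j with
  | inl a => i @: B a
  | inr x => new_bag (ends (val x)) (val x)
  end.

Definition bag_rel (z : W) :=
  [rel a b | [&& attach_rel t parent a b, z \in td_bag a & z \in td_bag b]].

Lemma td_tree : is_tree (attach_rel t parent).
Proof.
case: tdB => ttree _; apply: (attach_tree (rk := pos \o val)) => // x y.
by case/parent_inr.
Qed.

Lemma bag_rel_sym z : connect_sym (bag_rel z).
Proof.
have [[asym _] _] := td_tree.
by apply: sym_connect_sym => a b /=; rewrite asym; case: attach_rel; rewrite //= andbC.
Qed.

Lemma td_cover z : exists j, z \in td_bag j.
Proof.
case: (boolP (new_vertex z)) => [nz|/negPn/codomP [u ->]].
  by exists (inr (exist _ z nz)); apply: new_bag_self.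
by case: tdB => [_ [/(_ u) [a ua] _]]; exists (inl a); rewrite mem_imset.
Qed.

Lemma td_edge z1 z2 : f z1 z2 -> exists j, (z1 \in td_bag j) && (z2 \in td_bag j).
Proof.
case/edge_new_bag => [[u1 [u2 [-> -> e12]]]|[x nx zx]].
  have [_ [_ [edges _]]] := tdB; have [a /andP [u1a u2a]] := edges _ _ e12.
  by exists (inl a); rewrite !mem_imset // u1a.
by exists (inr (exist _ x nx)).
Qed.

Lemma td_climb u x : u \in ends (val x) ->
  exists2 a, u \in B a & connect (bag_rel (i u)) (inr x) (inl a).
Proof.
elim: {x}(pos (val x)).+1 {-2}x (ltnSn (pos (val x))) => // n IH x px ux.
case Ex: (parent x) => [a|y].
  have ax : a = anchor x by move: Ex; rewrite /parent; case: pos => // -[].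
  subst a.
  have ua : u \in B (anchor x) := subsetP (xchooseP (anchor_ex x)) u ux.
  exists (anchor x) => //; apply: connect1.
  by rewrite /= Ex eqxx mem_imset // ua andbT mem_new_bag_img // (valP x).
have [_ pyx yx] := parent_inr Ex.
have uy : u \in ends (val y) by rewrite yx.
have [a ua ya] := IH y (leq_trans pyx px) uy.
exists a => //; apply: connect_trans ya; apply: connect1.
by rewrite /= Ex eqxx /= !mem_new_bag_img ?(valP x) ?(valP y) // ux.
Qed.

Lemma td_connect_img u j : i u \in td_bag j ->
  exists2 a, u \in B a & connect (bag_rel (i u)) j (inl a).
Proof.
case: j => [a|x] /=; first by rewrite mem_imset // => ua; exists a.
by rewrite mem_new_bag_img ?(valP x) //; apply: td_climb.
Qed.

Lemma td_connect_new z (nz : new_vertex z) j : z \in td_bag j ->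
  connect (bag_rel z) j (inr (exist _ z nz)).
Proof.
case: j => [a|x] /=; first by rewrite (negbTE (new_notin_imset _ nz)).
rewrite mem_new_bag_new // => /orP [/eqP zx|zx].
  by have -> : x = exist _ z nz by apply: val_inj.
apply: connect1; rewrite /= (@parent_succ x (exist _ z nz) zx) eqxx orbT /=.
by rewrite new_bag_self andbT mem_new_bag_new // zx orbT.
Qed.

Lemma td_decomposition : tree_decomposition f (attach_rel t parent) td_bag.
Proof.
split; first exact: td_tree.
split; first exact: td_cover.
split; first exact: td_edge.
move=> z j1 j2; case: (boolP (new_vertex z)) => [nz|/negPn/codomP [u ->]] zj1 zj2.
  apply: connect_trans (td_connect_new nz zj1) _.
  by rewrite bag_rel_sym; apply: td_connect_new.
have [a1 ua1 j1a1] := td_connect_img zj1; have [a2 ua2 j2a2] := td_connect_img zj2.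
apply: connect_trans j1a1 _; rewrite bag_rel_sym; apply: connect_trans j2a2 _.
rewrite bag_rel_sym.
apply: (connect_map (r1 := [rel a b | [&& t a b, u \in B a & u \in B b]])).
  by move=> a b /= /and3P [tab uab ubb]; rewrite tab !mem_imset // uab.
by case: tdB => [_ [_ [_ ]]]; apply.
Qed.

Lemma td_width : \max_(j : I + new_type) #|td_bag j| <= (maxn k 3).+1.
Proof.
apply/bigmax_leqP => -[a|x] _ /=.
  apply: leq_trans (leq_imset_card i (B a)) _.
  apply: leq_trans (@leq_bigmax I (fun a => #|B a|) a) _.
  by apply: leq_trans widthB _; rewrite ltnS leq_maxl.
apply: leq_trans (card_new_bag _ (valP x)) _.
by apply: leq_trans (leq_add (card_ends _) (leqnn 2)) _; rewrite ltnS leq_maxr.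
Qed.

End TreeDecomposition.

Lemma tw_le_distension k : tw_le e k -> tw_le f (maxn k 3).
Proof.
move=> [I [t [B [tdB widthB]]]]; exists (I + new_type)%type, (attach_rel t (parent tdB)).
by exists (td_bag B); split; [apply: td_decomposition | apply: td_width].
Qed.

Section PathDecomposition.
Variables (k : nat) (s : seq {set V}).
Hypothesis pdS : path_decomposition e s.
Hypothesis widthS : \max_(X <- s) #|X| <= k.+1.

Lemma card_nth_bag m : #|nth set0 s m| <= k.+1.
Proof.
case: (ltnP m (size s)) => [ms|]; last by move/(nth_default set0) ->; rewrite cards0.
apply: leq_trans widthS.
by apply: (@leq_bigmax_seq _ s xpredT (fun X : {set V} => #|X|)); rewrite ?mem_nth.
Qed.

Lemma nth_bag_index X : X \in s -> exists m : 'I_(size s), X = nth set0 s m.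
Proof.
move=> Xs; have Xi : index X s < size s by rewrite index_mem.
by exists (Ordinal Xi); rewrite nth_index.
Qed.

Definition first_bag x := find (fun X : {set V} => ends x \subset X) s.

Lemma first_bagP x : new_vertex x ->
  first_bag x < size s /\ ends x \subset nth set0 s (first_bag x).
Proof.
move=> nx; have [_ [edges _]] := pdS; have [X Xs /andP [e1X e2X]] := edges _ _ (e_ends nx).
have has_x : has (fun X : {set V} => ends x \subset X) s.
  by apply/hasP; exists X => //; rewrite subUset !sub1set e1X e2X.
by rewrite -has_find; split => //; apply: (nth_find set0 has_x).
Qed.

Lemma first_bag_strand x y : y \in strand x -> first_bag y = first_bag x.
Proof. by move=> /strand_ends ends_yx; rewrite /first_bag ends_yx. Qed.

Local Notation pw_index := ('I_(size s) + new_type)%type.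

Definition pw_block (j : pw_index) :=
  match j with inl m => val m | inr x => first_bag (val x) end.
Definition pw_strand (j : pw_index) :=
  match j with inl _ => 0 | inr x => (enum_rank (strand (val x))).+1 end.
Definition pw_pos (j : pw_index) :=
  match j with inl _ => 0 | inr x => pos (val x) end.

Definition pw_radix := (#|{set W}| + #|W|).+1.

(* Bags are ordered by block, then within a block the original bag comes first,
   followed by the new vertices strand by strand, each strand in path order. *)
Definition pw_key j := code3 pw_radix (pw_block j) (pw_strand j) (pw_pos j).

Definition pw_bag (j : pw_index) : {set W} :=
  match j with
  | inl m => i @: nth set0 s m
  | inr x => new_bag (nth set0 s (first_bag (val x))) (val x)
  end.

Lemma pw_strand_lt j : pw_strand j < pw_radix.
Proof.
by case: j => [//|x]; rewrite /pw_radix ltnS (leq_trans (ltn_ord _) (leq_addr _ _)).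
Qed.

Lemma pw_pos_lt j : pw_pos j < pw_radix.
Proof.
case: j => [//|x]; rewrite /pw_radix ltnS (leq_trans _ (leq_addl _ _)) //.
exact: ltnW (pos_lt_card (valP x)).
Qed.

Lemma pw_block_lt j : pw_block j < size s.
Proof. by case: j => [m|x] /=; [apply: ltn_ord | case: (first_bagP (valP x))]. Qed.

Lemma leq_pw_key_block a b : pw_key a <= pw_key b -> pw_block a <= pw_block b.
Proof. by apply: leq_code3; rewrite ?pw_strand_lt ?pw_pos_lt. Qed.

Lemma pw_key_inj : injective pw_key.
Proof.
move=> a b /code3_inj; rewrite !pw_strand_lt !pw_pos_lt => /(_ isT isT isT isT).
case: a b => [ma|xa] [mb|xb] /= [block_ab strand_ab pos_ab] //.
  by congr inl; apply: val_inj.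
move/succn_inj/ord_inj/enum_rank_inj: strand_ab => strand_ab.
have xba : val xb \in strand (val xa) by rewrite strand_ab strand_self ?(valP xb).
by congr inr; apply: val_inj; apply/esym/(pos_inj (valP xa) xba).
Qed.

Lemma pw_key_succ (x y : new_type) : val y \in succ (val x) ->
  pw_key (inr y) = (pw_key (inr x)).+1.
Proof.
move=> yx; have yx' := succ_strand yx.
by rewrite /pw_key /= (first_bag_strand yx') (strand_eq yx') (succ_pos yx) /code3 addnS.
Qed.

Lemma mem_pw_bag_img u j : (i u \in pw_bag j) = (u \in nth set0 s (pw_block j)).
Proof. by case: j => [m|x] /=; rewrite ?mem_imset ?mem_new_bag_img ?(valP x). Qed.

Lemma mem_pw_bag_new z (nz : new_vertex z) j : z \in pw_bag j ->
  pw_key j = pw_key (inr (exist _ z nz)) \/ (pw_key j).+1 = pw_key (inr (exist _ z nz)).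
Proof.
case: j => [m|x] /=; first by rewrite (negbTE (new_notin_imset _ nz)).
rewrite mem_new_bag_new // => /orP [/eqP zx|zx].
  by left; congr pw_key; congr inr; apply: val_inj.
by right; rewrite (@pw_key_succ x (exist _ z nz)).
Qed.

Definition pw_seq := sort (fun a b => pw_key a <= pw_key b) (enum {: pw_index}).
Definition pw_bags := map pw_bag pw_seq.

Lemma mem_pw_bags j : pw_bag j \in pw_bags.
Proof. by rewrite map_f // mem_sort mem_enum. Qed.

Lemma pw_interval a b c : pw_key a <= pw_key b -> pw_key b <= pw_key c ->
  pw_bag a :&: pw_bag c \subset pw_bag b.
Proof.
move=> ab bc; apply/subsetP => z; rewrite inE => /andP [].
case: (boolP (new_vertex z)) => [nz|/negPn/codomP [u ->]]; last first.
  rewrite !mem_pw_bag_img => ua uc; have [_ [_ itv]] := pdS.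
  have := itv _ _ _ (leq_pw_key_block ab) (leq_pw_key_block bc) (pw_block_lt c).
  by move/subsetP; apply; rewrite inE ua uc.
move=> za zc; have Ka := mem_pw_bag_new nz za; have Kc := mem_pw_bag_new nz zc.
have : pw_key b = pw_key a \/ pw_key b = pw_key c by lia.
by case=> /pw_key_inj ->.
Qed.

Lemma pw_decomposition : path_decomposition f pw_bags.
Proof.
have [cover [edges _]] := pdS.
split.
  move=> z; case: (boolP (new_vertex z)) => [nz|/negPn/codomP [u ->]].
    by exists (pw_bag (inr (exist _ z nz))); rewrite ?mem_pw_bags ?new_bag_self.
  have [X Xs uX] := cover u; have [m Xm] := nth_bag_index Xs.
  by exists (pw_bag (inl m)); rewrite ?mem_pw_bags //= mem_imset -?Xm.
split.
  move=> z1 z2 /edge_new_bag [[u1 [u2 [-> -> e12]]]|[x nx /andP [z1x z2x]]].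
    have [X Xs /andP [u1X u2X]] := edges _ _ e12; have [m Xm] := nth_bag_index Xs.
    by exists (pw_bag (inl m)); rewrite ?mem_pw_bags //= !mem_imset -?Xm // u1X.
  exists (pw_bag (inr (exist _ x nx))); rewrite ?mem_pw_bags //.
  have /new_bagS/subsetP sub := (first_bagP nx).2.
  by rewrite !sub.
apply: interval_nth_sorted; first by apply: sort_sorted => a b; apply: leq_total.
by move=> a b c _ _ _; apply: pw_interval.
Qed.

Lemma pw_width : \max_(Y <- pw_bags) #|Y| <= (k + 2).+1.
Proof.
apply/bigmax_leqP_seq => Y /mapP [[m|x] _ ->] _ /=.
  by apply: leq_trans (leq_imset_card _ _) _; apply: leq_trans (card_nth_bag m) _; lia.
apply: leq_trans (card_new_bag _ (valP x)) _.
by rewrite -addSn leq_add2r card_nth_bag.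
Qed.

End PathDecomposition.

Lemma pw_le_distension k : pw_le e k -> pw_le f (k + 2).
Proof.
move=> [s [pdS widthS]]; exists (pw_bags s); split.
  exact: pw_decomposition.
exact: pw_width.
Qed.

End Distension.

Lemma treewidth_spec (V : finType) (e : rel V) : tw_le e (treewidth e).
Proof. by rewrite /treewidth; case: ex_minnP => m /decPE. Qed.

Lemma treewidth_min (V : finType) (e : rel V) k : tw_le e k -> treewidth e <= k.
Proof. by move=> ek; rewrite /treewidth; case: ex_minnP => m _; apply; apply/decPE. Qed.

Lemma pathwidth_spec (V : finType) (e : rel V) : pw_le e (pathwidth e).
Proof. by rewrite /pathwidth; case: ex_minnP => m /decPE. Qed.

Lemma pathwidth_min (V : finType) (e : rel V) k : pw_le e k -> pathwidth e <= k.
Proof. by move=> ek; rewrite /pathwidth; case: ex_minnP => m _; apply; apply/decPE. Qed.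

Theorem lemma4p6 (V W : finType) (e : rel V) (f : rel W) :
  simple_graph e -> simple_graph f -> is_distension e f ->
  treewidth f <= maxn (treewidth e) 3 /\ pathwidth f <= pathwidth e + 2.
Proof.
move=> _ [fsym _] [i [end1 [end2 [inj_i [f_img e_ends f_new_img f_new_new strand_path]]]]].
have dist_tw := tw_le_distension fsym inj_i f_img e_ends f_new_img f_new_new strand_path.
have dist_pw := pw_le_distension fsym inj_i f_img e_ends f_new_img f_new_new strand_path.
split.
  by apply: treewidth_min; apply: dist_tw; apply: treewidth_spec.
by apply: pathwidth_min; apply: dist_pw; apply: pathwidth_spec.
Qed.
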